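(* Let $S$ be a memory system satisfying the Causality, Data Independence, Processor Symmetry and Location Symmetry assumptions, and let $n,m\ge1$. Suppose there is a simple witness $\Omega$ for $S(n,m)$ such that for every unambiguous trace $\tau$ of $S(n,m)$ and every $1\le k\le\min\{n,m\}$, the graph $G(\Omega)(\tau)$ does not have a canonical $k$-nice cycle. Then every trace of $S(n,m)$ is sequentially consistent.
   Context: Notation: $\mathbb{N}_n=\{1,\dots,n\}$, $\mathbb{W}_n=\{0,\dots,n\}$, $\mathbb{W}=\{0,1,2,\dots\}$. Memory events $E(n,m,v)=\{R,W\}\times\mathbb{N}_n\times\mathbb{N}_m\times\mathbb{W}_v$; for $e=\langle a,b,c,d\rangle$, $op(e)=a$, $proc(e)=b$, $loc(e)=c$, $data(e)=d$; $0$ models the initial value of every location. A memory system is a family $S=(S(n,m,v))_{n,m,v\ge1}$, $S(n,m,v)$ a regular set of finite runs over an alphabet $E^a(n,m,v)\supseteq E(n,m,v)$ (other letters are internal events); $S(n,m)=\bigcup_{v\ge1}S(n,m,v)$. The trace of a run is its subsequence of memory events; traces of $S(n,m,v)$ (resp. $S(n,m)$) are traces of its runs. For a sequence $\tau$ of memory events with positions $1,\dots,|\tau|$: $P(\tau,i)=\{k: proc(\tau(k))=i\}$, $L(\tau,j)=\{k: loc(\tau(k))=j\}$, $L^w(\tau,j)$, $L^r(\tau,j)$ the write/read positions in $L(\tau,j)$, $M(\tau,i)=\{\langle u,v\rangle: u,v\in P(\tau,i), u<v\}$. $\tau$ is unambiguous if for every $j$ and $x\in L^w(\tau,j)$, $data(\tau(x))\ne0$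 and $data(\tau(x))\ne data(\tau(y))$ for all $y\in L^w(\tau,j)\setminus\{x\}$. Assumptions. Causality: for all $n,m,v$, every trace $\tau$ of $S(n,m,v)$, every $j$ and $x\in L^r(\tau,j)$, either $data(\tau(x))=0$ or some $y\in L^w(\tau,j)$ has $data(\tau(y))=data(\tau(x))$. Data Independence: with renaming functions $\lambda:\mathbb{N}_m\times\mathbb{W}\to\mathbb{W}$, $\lambda(j,0)=0$, and $\lambda^d(\langle a,b,c,d\rangle)=\langle a,b,c,\lambda(c,d)\rangle$ letterwise, for all $n,m,v$ and $\tau\in E(n,m,v)^*$: $\tau$ is a trace of $S(n,m,v)$ iff $\tau=\lambda^d(\tau')$ for some unambiguous trace $\tau'$ of $S(n,m)$ and renaming function $\lambda$ with values in $\mathbb{W}_v$. Processor Symmetry: for all $n,m,v$, every permutation $\lambda$ of $\mathbb{N}_n$ and trace $\tau$ of $S(n,m,v)$, $\lambda^p(\tau)$ is a trace of $S(n,m,v)$, where $\lambda^p(\langle a,b,c,d\rangle)=\langle a,\lambda(b),c,d\rangle$ letterwise. Location Symmetry: likewise for permutations $\lambda$ of $\mathbb{N}_m$ and $\lambda^l(\langle a,b,c,d\rangle)=\langle a,b,\lambda(c),d\rangle$. Sequential consistency: $\tau$ is serial if for every position $u$, with $upto(\tau,u)=\{k\le u: op(\tau(k))=W, loc(\tau(k))=loc(\tau(u))\}$, $data(\tau(u))=0$ when $upto(\tau,u)=\emptyset$, else $data(\tau(u))=data(\tau(\max upto(\tau,u)))$. $\tau$ is sequentially consistent if some permutation $f$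 of $\mathbb{N}_{|\tau|}$ satisfies (C1) $\langle u,v\rangle\in M(\tau,i)$ implies $f(u)<f(v)$, and (C2) $\tau_{f^{-1}(1)}\cdots\tau_{f^{-1}(|\tau|)}$ is serial. Witnesses: a witness $\Omega$ for $S(n,m)$ assigns to each trace $\tau$ and location $j$ a strict total order $\Omega(\tau,j)$ on $L^w(\tau,j)$; it is simple if $\langle x,y\rangle\in\Omega(\tau,j)$ iff $x<y$. For unambiguous $\tau$: $\langle x,y\rangle\in\Omega^e(\tau,j)$ (for $x,y\in L(\tau,j)$) iff (1) $data(\tau(x))=data(\tau(y))$, $op(\tau(x))=W$, $op(\tau(y))=R$; or (2) $data(\tau(x))=0\ne data(\tau(y))$; or (3) some $a,b\in L^w(\tau,j)$ have $\langle a,b\rangle\in\Omega(\tau,j)$, $data(\tau(a))=data(\tau(x))$, $data(\tau(b))=data(\tau(y))$. $G(\Omega)(\tau)$ is the directed graph on $\{1,\dots,|\tau|\}$ with edges $\bigcup_iM(\tau,i)\cup\bigcup_j\Omega^e(\tau,j)$. For $k\ge1$, $x\oplus1=x+1$ for $x<k$ and $k\oplus1=1$. A canonical $k$-nice cycle in $G(\Omega)(\tau)$ is a sequence $u_1,v_1,\dots,u_k,v_k$ of pairwise distinct vertices with $\langle u_x,v_x\rangle\in M(\tau,x)$ and $\langle v_x,u_{x\oplus1}\rangle\in\Omega^e(\tau,x\oplus1)$ for all $1\le x\le k$. *)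

From mathcomp Require Import all_boot all_fingroup.
Set Implicit Arguments. Unset Strict Implicit. Unset Printing Implicit Defensive.

Inductive opk := Rd | Wr.
Definition isW (o : opk) : bool := if o is Wr then true else false.
Definition isR (o : opk) : bool := if o is Rd then true else false.

Record ev := Ev { op : opk; proc : nat; loc : nat; data : nat }.
Definition ev0 : ev := Ev Rd 0 0 0.

Definition in_E (n m v : nat) (e : ev) : bool :=
  [&& 0 < proc e <= n, 0 < loc e <= m & data e <= v].

Inductive letter := Mem of ev | Int of nat.
Definition trace (r : seq letter) : seq ev :=
  pmap (fun l => if l is Mem e then Some e else None) r.

Definition regular_over (Sigma : letter -> bool) (L : seq letter -> Prop) : Prop :=
  exists (Q : finType) (q0 : Q) (F : pred Q) (d : Q -> letter -> Q),
    forall w, L w <-> (all Sigma w /\ F (foldl d q0 w)).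

(* A memory system: S n m v is a regular set of runs over a finite alphabet
   E^a(n,m,v) = E(n,m,v) plus finitely many internal letters. *)
Definition memory_system (S : nat -> nat -> nat -> seq letter -> Prop) : Prop :=
  forall n m v, 0 < n -> 0 < m -> 0 < v ->
    exists I : seq nat,
      regular_over (fun l => match l with
                             | Mem e => in_E n m v e
                             | Int i => i \in I end) (S n m v).

Definition trace_of_v S (n m v : nat) (tau : seq ev) : Prop :=
  exists r, S n m v r /\ trace r = tau.
Definition trace_of S (n m : nat) (tau : seq ev) : Prop :=
  exists v, 0 < v /\ trace_of_v S n m v tau.

(* ---------- positions (0-based: 0 .. size tau - 1) ---------- *)
Definition at_ (tau : seq ev) (k : nat) : ev := nth ev0 tau k.
Definition inP tau i k := k < size tau /\ proc (at_ tau k) = i.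
Definition inL tau j k := k < size tau /\ loc (at_ tau k) = j.
Definition inLw tau j k := inL tau j k /\ isW (op (at_ tau k)).
Definition inLr tau j k := inL tau j k /\ isR (op (at_ tau k)).
Definition Mrel tau i u v := inP tau i u /\ inP tau i v /\ u < v.

Definition unambiguous (tau : seq ev) : Prop :=
  forall j x, inLw tau j x ->
    data (at_ tau x) <> 0 /\
    (forall y, inLw tau j y -> y <> x -> data (at_ tau x) <> data (at_ tau y)).

Definition causality S : Prop :=
  forall n m v tau, 0 < n -> 0 < m -> 0 < v -> trace_of_v S n m v tau ->
    forall j x, inLr tau j x ->
      data (at_ tau x) = 0 \/
      exists y, inLw tau j y /\ data (at_ tau y) = data (at_ tau x).

Definition rename_d (lam : nat -> nat -> nat) (e : ev) : ev :=
  Ev (op e) (proc e) (loc e) (lam (loc e) (data e)).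

Definition data_independence S : Prop :=
  forall n m v tau, 0 < n -> 0 < m -> 0 < v -> all (in_E n m v) tau ->
    (trace_of_v S n m v tau <->
     exists tau' (lam : nat -> nat -> nat),
       unambiguous tau' /\ trace_of S n m tau' /\
       (forall j, lam j 0 = 0) /\ (forall j d, lam j d <= v) /\
       tau = map (rename_d lam) tau').

Definition perm_N (n : nat) (f : nat -> nat) : Prop :=
  (forall i, 0 < i <= n -> 0 < f i <= n) /\
  (forall i i', 0 < i <= n -> 0 < i' <= n -> f i = f i' -> i = i').

Definition rename_p (f : nat -> nat) (e : ev) : ev :=
  Ev (op e) (f (proc e)) (loc e) (data e).
Definition rename_l (f : nat -> nat) (e : ev) : ev :=
  Ev (op e) (proc e) (f (loc e)) (data e).

Definition processor_symmetry S : Prop :=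
  forall n m v f tau, 0 < n -> 0 < m -> 0 < v -> perm_N n f ->
    trace_of_v S n m v tau -> trace_of_v S n m v (map (rename_p f) tau).

Definition location_symmetry S : Prop :=
  forall n m v f tau, 0 < n -> 0 < m -> 0 < v -> perm_N m f ->
    trace_of_v S n m v tau -> trace_of_v S n m v (map (rename_l f) tau).

Definition upto (tau : seq ev) (u : nat) : seq nat :=
  [seq k <- iota 0 u.+1 | isW (op (at_ tau k)) && (loc (at_ tau k) == loc (at_ tau u))].

Definition serial (tau : seq ev) : Prop :=
  forall u, u < size tau ->
    if upto tau u is [::] then data (at_ tau u) = 0
    else data (at_ tau u) = data (at_ tau (\max_(k <- upto tau u) k)).

Definition seq_consistent (tau : seq ev) : Prop :=
  exists f : {perm 'I_(size tau)},
    (forall i (u v : 'I_(size tau)), Mrel tau i u v -> f u < f v) /\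
    serial [seq at_ tau (val ((f^-1)%g k)) | k <- enum 'I_(size tau)].

(* Omega tau j x y : <x,y> \in Omega(tau,j) *)
Definition witness S (n m : nat) (Omega : seq ev -> nat -> nat -> nat -> Prop) : Prop :=
  forall tau j, trace_of S n m tau ->
    (forall x y, Omega tau j x y -> inLw tau j x /\ inLw tau j y) /\
    (forall x, ~ Omega tau j x x) /\
    (forall x y z, Omega tau j x y -> Omega tau j y z -> Omega tau j x z) /\
    (forall x y, inLw tau j x -> inLw tau j y -> x <> y ->
                 Omega tau j x y \/ Omega tau j y x).

Definition simple_witness S (n m : nat) Omega : Prop :=
  witness S n m Omega /\
  forall tau j x y, trace_of S n m tau -> inLw tau j x -> inLw tau j y ->
    (Omega tau j x y <-> x < y).

Definition Oext (Omega : seq ev -> nat -> nat -> nat -> Prop) tau j x y : Prop :=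
  inL tau j x /\ inL tau j y /\
  ( (data (at_ tau x) = data (at_ tau y) /\ isW (op (at_ tau x)) /\ isR (op (at_ tau y)))
  \/ (data (at_ tau x) = 0 /\ data (at_ tau y) <> 0)
  \/ (exists a b, inLw tau j a /\ inLw tau j b /\ Omega tau j a b /\
        data (at_ tau a) = data (at_ tau x) /\ data (at_ tau b) = data (at_ tau y))).

Definition succk (k x : nat) : nat := if x < k then x.+1 else 1.

Definition canonical_nice_cycle Omega (tau : seq ev) (k : nat) : Prop :=
  exists u v : nat -> nat,
    (forall x y, 0 < x <= k -> 0 < y <= k ->
       u x <> v y /\ (x <> y -> u x <> u y /\ v x <> v y)) /\
    (forall x, 0 < x <= k ->
       Mrel tau x (u x) (v x) /\ Oext Omega tau (succk k x) (v x) (u (succk k x))).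

(* By data independence every trace is a data renaming of an unambiguous trace, and
   renaming data preserves sequential consistency, so it suffices to treat unambiguous
   traces. There every read observes a unique write or the initial value, which orders
   the accesses to each location; with program order this gives a graph whose topological
   sorts are serial reorderings, so an acyclic graph yields sequential consistency. A
   shortest cycle of the graph has no chords, hence alternates between program-order and
   location edges, its k program-order edges lie on distinct processors and its k
   location edges on distinct locations. Renaming processors and locations by the
   symmetry assumptions turns it into a canonical k-nice cycle of another unambiguous
   trace, which the hypothesis excludes. *)

From mathcomp Require Import all_boot all_fingroup.
From mathcomp Require Import zify.
From Stdlib Require Import Classical.
Set Implicit Arguments. Unset Strict Implicit. Unset Printing Implicit Defensive.

Lemma bigmax_seq_eq (l : seq nat) w :
  w \in l -> (forall k, k \in l -> k <= w) -> \max_(k <- l) k = w.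
Proof.
move=> w_l max_w; apply/eqP; rewrite eqn_leq; apply/andP; split.
  by apply/bigmax_leqP_seq => k k_l _; apply: max_w.
exact: leq_bigmax_seq.
Qed.

Lemma bigmax_seq_mem (l : seq nat) : l != [::] -> \max_(k <- l) k \in l.
Proof.
elim: l => // a [_ _|b l IH _]; first by rewrite big_seq1 mem_head.
rewrite big_cons in_cons; case: (leqP a (\max_(k <- b :: l) k)) => _.
  by rewrite IH ?orbT.
by rewrite eqxx.
Qed.

Lemma find_eq_nth T (x0 : T) (a1 a2 : pred T) s :
  (forall i, i < size s -> a1 (nth x0 s i) = a2 (nth x0 s i)) -> find a1 s = find a2 s.
Proof.
elim: s => //= x s IH eq_a; rewrite (eq_a 0) // (IH _) // => i lt_i.
exact: (eq_a i.+1).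
Qed.

Lemma at_map h tau z : z < size tau -> at_ (map h tau) z = h (at_ tau z).
Proof. by move=> lt_z; rewrite /at_ (nth_map ev0). Qed.

Lemma isW_negR o : isW o = ~~ isR o.
Proof. by case: o. Qed.

(** * Shortest cycles *)

Section Cycles.
Variable T : Type.
Implicit Types (e R : rel T) (c : nat -> T).

Definition cnext len i := if i.+1 < len then i.+1 else 0.

Definition is_cycle e len c :=
  0 < len /\ forall i, i < len -> e (c i) (c (cnext len i)).

Definition shortest_cycle e len c :=
  is_cycle e len c /\ forall len' c', is_cycle e len' c' -> len <= len'.

(* Holds when R, restricted to each class of cl, is a strict weak order. *)
Definition crossable K R (cl : T -> K) :=
  forall a b a' b', R a b -> R a' b' -> cl a = cl a' -> R a b' \/ R a' b.

Lemma cnext_lt len i : 0 < len -> cnext len i < len.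
Proof. by rewrite /cnext; case: ifP; lia. Qed.

Lemma cnext_neq len i : 1 < len -> cnext len i <> i.
Proof. by rewrite /cnext; case: ifP; lia. Qed.

Lemma cnext_inj len i j : i < len -> j < len -> cnext len i = cnext len j -> i = j.
Proof. by rewrite /cnext; case: ifP; case: ifP; lia. Qed.

Lemma cycle_rot e len c : is_cycle e len c -> is_cycle e len (c \o cnext len).
Proof. by move=> [len_gt0 step]; split=> // i _; apply/step/cnext_lt. Qed.

Lemma cycle_chord e len c i j : is_cycle e len c -> i < len -> j < len ->
  e (c i) (c j) -> j <> cnext len i -> exists len' c', is_cycle e len' c' /\ len' < len.
Proof.
(* Follow the cycle from j to i and close it with the chord. *)
move=> [len_gt0 step] lt_i lt_j chord ne_j.
pose idx t := if j + t < len then j + t else j + t - len.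
exists (if j <= i then i - j + 1 else i + len - j + 1), (c \o idx).
split; last by move: ne_j; rewrite /cnext; case: ifP; case: ifP; lia.
split=> [|t lt_t]; first by case: ifP; lia.
rewrite /cnext /=; case: ifP => lt_t1.
  have -> : idx t.+1 = cnext len (idx t).
    by move: lt_t lt_t1; rewrite /idx /cnext; do 4 case: ifP; lia.
  by apply: step; move: lt_t lt_t1; rewrite /idx; do 2 case: ifP; lia.
have -> : idx t = i by move: lt_t lt_t1; rewrite /idx; do 2 case: ifP; lia.
by rewrite /idx addn0 lt_j.
Qed.

Lemma shortest_cycle_exists e :
  (exists len c, is_cycle e len c) -> exists len c, shortest_cycle e len c.
Proof.
move=> [len0 [c0 cyc0]].
elim: len0 {-2}len0 (leqnn len0) c0 cyc0 => [|N IH] len le_len c cyc.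
  by case: cyc; lia.
have [[len' [c' [cyc' lt_len']]]|no_shorter] :=
  classic (exists len' c', is_cycle e len' c' /\ len' < len).
  by apply: (IH len' _ c' cyc'); lia.
exists len, c; split=> // len' c' cyc'; rewrite leqNgt; apply/negP => lt_len'.
by apply: no_shorter; exists len', c'.
Qed.

Lemma shortest_cycle_rot e len c :
  shortest_cycle e len c -> shortest_cycle e len (c \o cnext len).
Proof. by move=> [cyc min]; split=> //; apply: cycle_rot. Qed.

Section ShortestCycle.
Variables (e : rel T) (len : nat) (c : nat -> T).
Hypotheses (e_irr : irreflexive e) (shortest : shortest_cycle e len c).

Lemma shortest_cycle_gt1 : 1 < len.
Proof.
have [[len_gt0 step] _] := shortest; rewrite ltnNge; apply/negP => len_le1.
by have := step 0 len_gt0; rewrite /cnext; case: ifP => [|_]; [lia | rewrite e_irr].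
Qed.

Lemma shortest_cycle_chord i j :
  i < len -> j < len -> e (c i) (c j) -> j = cnext len i.
Proof.
move=> lt_i lt_j chord; case: (j =P cnext len i) => // ne_j.
have [len' [c' [cyc' lt_len']]] := cycle_chord shortest.1 lt_i lt_j chord ne_j.
by have := shortest.2 _ _ cyc'; lia.
Qed.

Lemma shortest_cycle_no_two_steps R i : subrel R e -> transitive R -> i < len ->
  R (c i) (c (cnext len i)) -> ~ R (c (cnext len i)) (c (cnext len (cnext len i))).
Proof.
move=> sub_R trans_R lt_i R1 R2; have len_gt1 := shortest_cycle_gt1.
have := shortest_cycle_chord lt_i (cnext_lt _ (ltnW len_gt1)) (sub_R _ _ (trans_R _ _ _ R1 R2)).
exact: cnext_neq.
Qed.

Lemma shortest_cycle_distinct_classes R K (cl : T -> K) i j :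
  subrel R e -> crossable R cl -> i < len -> j < len -> i <> j ->
  R (c i) (c (cnext len i)) -> R (c j) (c (cnext len j)) -> cl (c i) <> cl (c j).
Proof.
move=> sub_R cross_R lt_i lt_j ne_ij Ri Rj same_cl.
have len_gt0 : 0 < len by lia.
case: (cross_R _ _ _ _ Ri Rj same_cl) => /sub_R chord; apply: ne_ij.
  exact/(cnext_inj lt_i lt_j)/esym/(shortest_cycle_chord lt_i (cnext_lt _ len_gt0)).
exact/(cnext_inj lt_i lt_j)/(shortest_cycle_chord lt_j (cnext_lt _ len_gt0)).
Qed.

End ShortestCycle.

Section Alternation.
Variables (A B : rel T) (K : Type) (clA clB : T -> K).
Hypotheses (A_irr : irreflexive A) (B_irr : irreflexive B).
Hypotheses (A_trans : transitive A) (B_trans : transitive B).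
Hypotheses (A_cross : crossable A clA) (B_cross : crossable B clB).

Let AB := [rel x y | A x y || B x y].
Let AB_irr : irreflexive AB. Proof. by move=> x /=; rewrite A_irr B_irr. Qed.
Let sub_A : subrel A AB. Proof. by move=> x y /= ->. Qed.
Let sub_B : subrel B AB. Proof. by move=> x y /= ->; rewrite orbT. Qed.

Lemma shortest_cycle_startA len c : shortest_cycle AB len c ->
  exists2 c', shortest_cycle AB len c' & A (c' 0) (c' (cnext len 0)).
Proof.
move=> short; have [[len_gt0 step] _] := short.
case A0: (A (c 0) (c (cnext len 0))); first by exists c.
exists (c \o cnext len); first exact: shortest_cycle_rot.
have /orP [//|B1] := step _ (cnext_lt 0 len_gt0).
have /orP [|B0] := step 0 len_gt0; first by rewrite A0.
by case: (shortest_cycle_no_two_steps AB_irr short sub_B B_trans len_gt0 B0 B1).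
Qed.

Lemma shortest_cycle_alternates len c :
  shortest_cycle AB len c -> A (c 0) (c (cnext len 0)) ->
  forall i, i < len -> (if odd i then B else A) (c i) (c (cnext len i)).
Proof.
move=> short A0; have [[len_gt0 step] _] := short.
elim=> [//|i IH] lt_i1; have lt_i : i < len by lia.
have next_i : cnext len i = i.+1 by rewrite /cnext lt_i1.
have no2A := shortest_cycle_no_two_steps AB_irr short sub_A A_trans lt_i.
have no2B := shortest_cycle_no_two_steps AB_irr short sub_B B_trans lt_i.
rewrite next_i in no2A no2B; have := IH lt_i; rewrite next_i /=.
case: (odd i) => /= prev; case/orP: (step _ lt_i1) => // next.
  by case: (no2B prev next).
by case: (no2A prev next).
Qed.

Lemma shortest_cycle_nice len c0 : shortest_cycle AB len c0 ->
  exists k (u v : nat -> T), [/\ 0 < k,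
    forall x, 0 < x <= k -> A (u x) (v x) /\ B (v x) (u (succk k x)) &
    forall x y, 0 < x <= k -> 0 < y <= k -> x <> y ->
      clA (u x) <> clA (u y) /\ clB (v x) <> clB (v y)].
Proof.
move=> short0; have [c short A0] := shortest_cycle_startA short0.
have len_gt1 := shortest_cycle_gt1 AB_irr short.
have alt := shortest_cycle_alternates short A0.
have next_last : cnext len len.-1 = 0 by rewrite /cnext; case: ifP; lia.
have odd_last : odd len.-1.
  apply: contraT => even_last; have := alt len.-1 ltac:(lia).
  rewrite (negbTE even_last) next_last => A_last.
  have := shortest_cycle_no_two_steps AB_irr short sub_A A_trans (i := len.-1).
  by rewrite next_last => /(_ ltac:(lia) A_last A0).
pose k := len./2.
have len_k : len = k.*2.
  by rewrite -[LHS](odd_double_half len) -[len in odd len](ltn_predK len_gt1) /= odd_last.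
have A_step x : 0 < x <= k -> A (c (x.-1).*2) (c (x.-1).*2.+1).
  by move=> x_k; have := alt (x.-1).*2 ltac:(lia); rewrite odd_double /cnext ifT //; lia.
have B_step x : 0 < x <= k -> B (c (x.-1).*2.+1) (c (cnext len (x.-1).*2.+1)).
  by move=> x_k; have := alt (x.-1).*2.+1 ltac:(lia); rewrite /= odd_double.
exists k, (fun x => c (x.-1).*2), (fun x => c (x.-1).*2.+1); split=> [|x x_k|x y x_k y_k ne_xy] /=.
- lia.
- split; first exact: A_step.
  have -> : (succk k x).-1.*2 = cnext len (x.-1).*2.+1.
    by rewrite /succk /cnext; do 2 case: ifP; lia.
  exact: B_step.
split.
  apply: (shortest_cycle_distinct_classes short sub_A A_cross
            (i := (x.-1).*2) (j := (y.-1).*2)); try lia.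
    by rewrite /cnext ifT; [apply: A_step | lia].
  by rewrite /cnext ifT; [apply: A_step | lia].
apply: (shortest_cycle_distinct_classes short sub_B B_cross
          (i := (x.-1).*2.+1) (j := (y.-1).*2.+1)); try lia.
  exact: B_step.
exact: B_step.
Qed.

End Alternation.
End Cycles.

(** * The access graph of a trace *)

Definition prog_order tau : rel nat := fun x y =>
  [&& y < size tau, x < y & proc (at_ tau x) == proc (at_ tau y)].

Definition same_write (e w : ev) := [&& isW (op w), loc w == loc e & data w == data e].

(* Accesses to one location are ranked by the write they observe: 2w+2 for the
   write at position w, 2w+3 for a read of its value, 0 for a read of the initial
   value. On unambiguous causal traces loc_order is then Omega^e for the simple
   witness. *)
Definition loc_rank tau x :=
  let e := at_ tau x in
  if data e == 0 then 0 else (find (same_write e) tau).*2 + 2 + isR (op e).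

Definition loc_order tau : rel nat := fun x y =>
  [&& x < size tau, y < size tau, loc (at_ tau x) == loc (at_ tau y)
    & loc_rank tau x < loc_rank tau y].

Definition trace_graph tau := [rel x y | prog_order tau x y || loc_order tau x y].

Definition causal tau := forall j x, inLr tau j x ->
  data (at_ tau x) = 0 \/ exists y, inLw tau j y /\ data (at_ tau y) = data (at_ tau x).

Section TraceGraph.
Variable tau : seq ev.

Lemma prog_order_irr : irreflexive (prog_order tau).
Proof. by move=> x; rewrite /prog_order ltnn andbF. Qed.

Lemma prog_order_trans : transitive (prog_order tau).
Proof.
move=> y x z /and3P [_ lt_xy /eqP P_xy] /and3P [lt_z lt_yz /eqP P_yz].
by rewrite /prog_order lt_z P_xy P_yz eqxx andbT; lia.
Qed.

Lemma prog_order_cross : crossable (prog_order tau) (fun x => proc (at_ tau x)).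
Proof.
move=> a b a' b' /and3P [lt_b lt_ab /eqP P_ab] /and3P [lt_b' lt_ab' /eqP P_ab'] P_aa'.
case: (ltnP a b') => lt_ab2.
  by left; rewrite /prog_order lt_b' lt_ab2 P_aa' P_ab' eqxx.
by right; rewrite /prog_order lt_b -P_aa' P_ab eqxx andbT; lia.
Qed.

Lemma loc_order_irr : irreflexive (loc_order tau).
Proof. by move=> x; rewrite /loc_order ltnn !andbF. Qed.

Lemma loc_order_trans : transitive (loc_order tau).
Proof.
move=> y x z /and4P [lt_x _ /eqP L_xy r_xy] /and4P [_ lt_z /eqP L_yz r_yz].
by rewrite /loc_order lt_x lt_z L_xy L_yz eqxx /=; lia.
Qed.

Lemma loc_order_cross : crossable (loc_order tau) (fun x => loc (at_ tau x)).
Proof.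
move=> a b a' b' /and4P [lt_a lt_b /eqP L_ab r_ab].
move=> /and4P [lt_a' lt_b' /eqP L_ab' r_ab'] L_aa'.
case: (ltnP (loc_rank tau a) (loc_rank tau b')) => r_ab2.
  by left; rewrite /loc_order lt_a lt_b' L_aa' L_ab' eqxx.
by right; rewrite /loc_order lt_a' lt_b -L_aa' L_ab eqxx /=; lia.
Qed.

Lemma loc_rank_data0 x : data (at_ tau x) = 0 -> loc_rank tau x = 0.
Proof. by rewrite /loc_rank => ->. Qed.

Hypotheses (unamb : unambiguous tau) (causal_tau : causal tau).

Lemma find_same_write x w : w < size tau -> same_write (at_ tau x) (at_ tau w) ->
  find (same_write (at_ tau x)) tau = w.
Proof.
move=> lt_w same_w.
have has_w : has (same_write (at_ tau x)) tau by apply/(has_nthP ev0); exists w.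
have := nth_find ev0 has_w; have := has_w; rewrite has_find.
set i := find _ _ => lt_i same_i; case: (i =P w) => // ne_iw.
move: same_w same_i => /and3P [W_w /eqP L_w /eqP D_w] /and3P [W_i /eqP L_i /eqP D_i].
have [_ uniq_i] := unamb (conj (conj lt_i L_i) W_i).
by case: (uniq_i w (conj (conj lt_w L_w) W_w) (nesym ne_iw)); rewrite /at_ D_i D_w.
Qed.

Lemma loc_rank_write w : w < size tau -> isW (op (at_ tau w)) -> loc_rank tau w = w.*2 + 2.
Proof.
move=> lt_w W_w; have [nz_w _] := unamb (conj (conj lt_w erefl) W_w).
rewrite /loc_rank (negbTE (introN eqP nz_w)) (find_same_write lt_w); last first.
  by rewrite /same_write W_w !eqxx.
by rewrite isW_negR in W_w; rewrite (negbTE W_w) addn0.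
Qed.

Lemma loc_rank_observed x : x < size tau -> data (at_ tau x) <> 0 ->
  exists w, [/\ w < size tau, isW (op (at_ tau w)), loc (at_ tau w) = loc (at_ tau x),
    data (at_ tau w) = data (at_ tau x) & loc_rank tau x = w.*2 + 2 + isR (op (at_ tau x))].
Proof.
move=> lt_x nz_x.
suff [w [lt_w W_w L_w D_w]] : exists w, [/\ w < size tau, isW (op (at_ tau w)),
    loc (at_ tau w) = loc (at_ tau x) & data (at_ tau w) = data (at_ tau x)].
  exists w; split=> //; rewrite /loc_rank (negbTE (introN eqP nz_x)).
  by rewrite (find_same_write lt_w) // /same_write W_w L_w D_w !eqxx.
case W_x: (isW (op (at_ tau x))); first by exists x.
have R_x : isR (op (at_ tau x)) by rewrite isW_negR in W_x; move/negbFE: W_x.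
case: (causal_tau (conj (conj lt_x erefl) R_x)) => // [[w [[[lt_w L_w] W_w] D_w]]].
by exists w.
Qed.

Lemma loc_order_Oext Omega x y :
  (forall j a b, inLw tau j a -> inLw tau j b -> Omega tau j a b <-> a < b) ->
  loc_order tau x y -> Oext Omega tau (loc (at_ tau x)) x y.
Proof.
move=> simple /and4P [lt_x lt_y /eqP L_xy r_xy].
do 2 (split; first by split).
have nz_y : data (at_ tau y) <> 0 by move/loc_rank_data0 => r_y; rewrite r_y in r_xy.
case: (data (at_ tau x) =P 0) => [D_x|nz_x]; first by right; left.
have [a [lt_a W_a L_a D_a r_x]] := loc_rank_observed lt_x nz_x.
have [b [lt_b W_b L_b D_b r_y]] := loc_rank_observed lt_y nz_y.
rewrite r_x r_y in r_xy.
case: (ltngtP a b) => [lt_ab|lt_ba|eq_ab].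
- have W_a' : inLw tau (loc (at_ tau x)) a by [].
  have W_b' : inLw tau (loc (at_ tau x)) b by split=> //; split=> //; rewrite L_b L_xy.
  by right; right; exists a, b; do 2 split=> //; split; first exact/simple.
- lia.
- left; subst b; split; first by rewrite -D_a -D_b.
  move: r_xy; rewrite isW_negR.
  by case: (isR (op (at_ tau x))); case: (isR (op (at_ tau y))) => //=; lia.
Qed.

End TraceGraph.

(** * Serial reorderings *)

Definition writes_to (s : seq ev) (j k : nat) := isW (op (at_ s k)) && (loc (at_ s k) == j).

Lemma serial_intro s :
  (forall u, u < size s ->
     (data (at_ s u) = 0 /\ forall k, k <= u -> ~~ writes_to s (loc (at_ s u)) k) \/
     exists w, [/\ w <= u, writes_to s (loc (at_ s u)) w, data (at_ s w) = data (at_ s u) &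
       forall k, k <= u -> writes_to s (loc (at_ s u)) k -> k <= w]) ->
  serial s.
Proof.
move=> latest u lt_u.
have mem_upto k : (k \in upto s u) = writes_to s (loc (at_ s u)) k && (k <= u).
  by rewrite /upto mem_filter mem_iota add0n ltnS.
case: (latest u lt_u) => [[D_u none] | [w [le_wu W_w D_w max_w]]].
  case E: (upto s u) => [|k l] //; have : k \in upto s u by rewrite E mem_head.
  by rewrite mem_upto => /andP [W_k /none]; rewrite W_k.
have w_upto : w \in upto s u by rewrite mem_upto W_w le_wu.
case E: (upto s u) => [|? ?]; first by rewrite E in w_upto.
rewrite -E (bigmax_seq_eq w_upto) // => k; rewrite mem_upto => /andP [W_k le_ku].
exact: max_w.
Qed.

Section Reorder.
Variable tau : seq ev.
Local Notation N := (size tau).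
Variable f : {perm 'I_N}.

Definition reorder := [seq at_ tau (val ((f^-1)%g k)) | k <- enum 'I_N].

Definition reads_latest (x : 'I_N) :=
  (data (at_ tau x) = 0 /\ forall y : 'I_N, f y <= f x -> ~~ writes_to tau (loc (at_ tau x)) y) \/
  exists w : 'I_N, [/\ f w <= f x, writes_to tau (loc (at_ tau x)) w,
    data (at_ tau w) = data (at_ tau x) &
    forall y : 'I_N, f y <= f x -> writes_to tau (loc (at_ tau x)) y -> f y <= f w].

Lemma serial_reorder : (forall x, reads_latest x) -> serial reorder.
Proof.
move=> latest; apply: serial_intro => u; rewrite size_map size_enum_ord => lt_u.
have at_f y : at_ reorder (f y) = at_ tau y.
  by rewrite /at_ (nth_map y) ?size_enum_ord // nth_ord_enum permK.
pose x := (f^-1)%g (Ordinal lt_u).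
have -> : u = f x by rewrite permKV.
have below k : k <= f x -> exists2 y : 'I_N, k = f y & f y <= f x.
  move=> le_k; have lt_k : k < N by have := ltn_ord (f x); lia.
  by exists ((f^-1)%g (Ordinal lt_k)); rewrite permKV.
rewrite at_f /writes_to; case: (latest x) => [[D_x none]|[w [le_wx W_w D_w max_w]]].
  by left; split=> // k /below [y -> le_y]; rewrite at_f; apply: none.
right; exists (f w); rewrite !at_f; split=> // k /below [y -> le_y]; rewrite at_f.
exact: max_w.
Qed.

Lemma reads_latest_monotone : unambiguous tau -> causal tau ->
  (forall x y : 'I_N, loc_order tau x y -> f x < f y) -> forall x, reads_latest x.
Proof.
move=> unamb causal_tau mono x; have lt_x := ltn_ord x.
case W_x: (isW (op (at_ tau x))).
  by right; exists x; split; rewrite // /writes_to W_x eqxx.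
have R_x : isR (op (at_ tau x)) by rewrite isW_negR in W_x; move/negbFE: W_x.
have rank_write (y : 'I_N) := loc_rank_write unamb (ltn_ord y).
case: (data (at_ tau x) =P 0) => [D_x|nz_x].
  left; split=> // y le_yx; apply/negP => /andP [W_y /eqP L_y].
  suff : f x < f y by lia.
  apply: mono; rewrite /loc_order lt_x (ltn_ord y) L_y eqxx (rank_write y) //.
  by rewrite (loc_rank_data0 D_x) addn2.
have [w [lt_w W_w L_w D_w rank_x]] := loc_rank_observed unamb causal_tau lt_x nz_x.
rewrite R_x /= in rank_x.
have lt_wx : f (Ordinal lt_w) < f x.
  apply: mono; rewrite /loc_order lt_w lt_x L_w eqxx rank_x.
  by rewrite (rank_write (Ordinal lt_w)) //=; lia.
right; exists (Ordinal lt_w); split; rewrite /writes_to ?W_w ?L_w ?eqxx //; first exact: ltnW.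
move=> y le_yx /andP [W_y /eqP L_y]; case: (ltngtP y w) => [lt_yw|lt_wy|eq_yw].
- apply/ltnW/mono; rewrite /loc_order lt_w L_y L_w eqxx /=.
  by rewrite (rank_write y) // (rank_write (Ordinal lt_w)) //=; lia.
- suff : f x < f y by lia.
  by apply: mono; rewrite /loc_order lt_x (ltn_ord y) L_y eqxx rank_x (rank_write y) //=; lia.
- by have -> : y = Ordinal lt_w by apply: val_inj.
Qed.

End Reorder.

Lemma perm_of_injective_rank N (h : 'I_N -> nat) : injective h ->
  exists f : {perm 'I_N}, forall x y, h x < h y -> f x < f y.
Proof.
move=> inj_h; pose r x := #|[set z | h z < h x]|.
have r_mono x y : h x < h y -> r x < r y.
  move=> lt_xy; apply: proper_card; apply/properP; split.
    by apply/subsetP => z; rewrite !inE => /ltn_trans; apply.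
  by exists x; rewrite !inE ?ltnn.
have r_lt x : r x < N.
  rewrite -[N in _ < N]card_ord -cardsT; apply: proper_card; rewrite properT.
  by apply/eqP => all_below; have := in_setT x; rewrite -all_below inE ltnn.
have r_inj : injective (fun x => Ordinal (r_lt x)).
  move=> x y [eq_r]; apply: inj_h.
  by case: (ltngtP (h x) (h y)) => // /r_mono; rewrite eq_r ltnn.
by exists (perm r_inj) => x y; rewrite !permE; apply: r_mono.
Qed.

(* Ranking by the number of ancestors, ties broken by position. *)
Lemma acyclic_perm N (E : rel 'I_N) : (forall x y, E x y -> ~~ connect E y x) ->
  exists f : {perm 'I_N}, forall x y, E x y -> f x < f y.
Proof.
move=> acyclic; pose anc x := #|[set z | connect E z x]|.
have anc_lt x y : E x y -> anc x < anc y.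
  move=> Exy; apply: proper_card; apply/properP; split.
    by apply/subsetP => z; rewrite !inE => /connect_trans; apply; apply: connect1.
  by exists y; rewrite !inE ?connect0 ?acyclic.
have [|f f_mono] := @perm_of_injective_rank N (fun x => anc x * N + x).
  move=> x y /= /(congr1 (modn^~ N)) /=; rewrite !modnMDl !modn_small //.
  exact: val_inj.
exists f => x y /anc_lt lt_anc; apply: f_mono.
apply: (@leq_trans ((anc x).+1 * N)); first by rewrite mulSn [N + _]addnC ltn_add2l.
exact: leq_trans (leq_mul lt_anc (leqnn N)) (leq_addr _ _).
Qed.

Lemma connect_cycle N (e : rel nat) (x y : 'I_N) :
  e x y -> connect (relpre val e) y x -> exists len c, is_cycle e len c.
Proof.
move=> exy /connectP [p p_path p_last].
exists (size p).+1, (fun i => val (nth x (y :: p) i)); split=> // i lt_i.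
rewrite /cnext; case: ifP => lt_i1; first by move/(pathP x): p_path; apply.
have -> : i = size p by lia.
by rewrite -[size p]/((size (y :: p)).-1) nth_last /= -p_last.
Qed.

Lemma seq_consistent_of_acyclic tau : unambiguous tau -> causal tau ->
  (forall len c, ~ is_cycle (trace_graph tau) len c) -> seq_consistent tau.
Proof.
move=> unamb causal_tau acyclic.
have [|f f_mono] := @acyclic_perm (size tau) (relpre val (trace_graph tau)).
  by move=> x y exy; apply/negP => /(connect_cycle exy) [len [c]]; apply: acyclic.
exists f; split.
  move=> i x y [[_ P_x] [[lt_y P_y] lt_xy]]; apply: f_mono.
  by rewrite /= /prog_order lt_y lt_xy P_x P_y eqxx.
apply/serial_reorder/reads_latest_monotone => // x y lo_xy.
by apply: f_mono; rewrite /= lo_xy orbT.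
Qed.

(** * Renaming events *)

Lemma serial_rename_d lam s :
  (forall j, lam j 0 = 0) -> serial s -> serial (map (rename_d lam) s).
Proof.
move=> lam0 serial_s u; rewrite size_map => lt_u.
have -> : upto (map (rename_d lam) s) u = upto s u.
  by apply: eq_in_filter => k; rewrite mem_iota => lt_k; rewrite !at_map //; lia.
have := serial_s u lt_u; case E: (upto s u) => [|a l]; first by rewrite at_map // /= => ->.
rewrite -E; set M := \max_(k <- upto s u) k => D_u.
have : M \in upto s u by apply: bigmax_seq_mem; rewrite E.
rewrite /upto mem_filter mem_iota => /andP [/andP [_ /eqP L_M] /andP [_ lt_M]].
by rewrite !at_map /= ?D_u ?L_M //; lia.
Qed.

Lemma seq_consistent_rename_d lam tau : (forall j, lam j 0 = 0) ->
  seq_consistent tau -> seq_consistent (map (rename_d lam) tau).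
Proof.
move=> lam0; rewrite /seq_consistent size_map => [[f [f_mono serial_f]]].
exists f; split=> [i x y|].
  by rewrite /Mrel /inP size_map !at_map //; apply: f_mono.
rewrite (eq_map (g := rename_d lam \o (fun k => at_ tau (val ((f^-1)%g k))))); last first.
  by move=> k; rewrite /= at_map.
by rewrite map_comp; apply: serial_rename_d.
Qed.

Lemma trace_in_E S n m v tau : memory_system S -> 0 < n -> 0 < m -> 0 < v ->
  trace_of_v S n m v tau -> all (in_E n m v) tau.
Proof.
move=> mem_S n_gt0 m_gt0 v_gt0 [r [S_r <-]].
have [I [Q [q0 [F [d accept]]]]] := mem_S n m v n_gt0 m_gt0 v_gt0.
have [all_r _] := (accept r).1 S_r.
by elim: r all_r {S_r} => // [[e|i] r IH] /= /andP [? ?]; rewrite ?IH ?andbT.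
Qed.

Lemma perm_N_eq n f a b : perm_N n f -> 0 < a <= n -> 0 < b <= n -> (f a == f b) = (a == b).
Proof. by move=> [_ f_inj] a_n b_n; apply/eqP/eqP => [/(f_inj _ _ a_n b_n)|->]. Qed.

Lemma perm_N_inverse n k (p : nat -> nat) :
  (forall x, 0 < x <= k -> 0 < p x <= n) ->
  (forall x y, 0 < x <= k -> 0 < y <= k -> p x = p y -> x = y) ->
  exists2 f, perm_N n f & forall x, 0 < x <= k -> f (p x) = x.
Proof.
move=> p_range p_inj.
pose P := map p (iota 1 k); pose Q := [seq z <- iota 1 n | z \notin P].
have P_uniq : uniq P.
  rewrite map_inj_in_uniq ?iota_uniq // => x y; rewrite !mem_iota => x_k y_k.
  by apply: p_inj; lia.
have PQ_uniq : uniq (P ++ Q).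
  rewrite cat_uniq P_uniq filter_uniq ?iota_uniq // andbT.
  by apply/hasPn => z; rewrite mem_filter => /andP [].
have mem_PQ z : (z \in P ++ Q) = (0 < z <= n).
  rewrite mem_cat mem_filter mem_iota; case: (boolP (z \in P)) => [/mapP [x]|] /=; last lia.
  by rewrite mem_iota => x_k ->; rewrite p_range //; lia.
have size_PQ : size (P ++ Q) = n.
  rewrite (perm_size (uniq_perm PQ_uniq (iota_uniq 1 n) _)) ?size_iota // => z.
  by rewrite mem_PQ mem_iota; lia.
exists (fun z => (index z (P ++ Q)).+1); first split.
- by move=> z z_n; rewrite /= -size_PQ index_mem mem_PQ.
- by move=> z z' z_n z'_n [] eq_idx; apply: (index_inj 0 _ _ eq_idx); rewrite mem_PQ.
move=> x x_k; have -> : p x = nth 0 P x.-1.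
  by rewrite (nth_map 0) ?size_iota ?nth_iota; [congr p | |]; lia.
by rewrite index_cat mem_nth ?index_uniq ?size_map ?size_iota //; lia.
Qed.

Definition relabel (f g : nat -> nat) tau := map (rename_l g) (map (rename_p f) tau).

Lemma size_relabel f g tau : size (relabel f g tau) = size tau.
Proof. by rewrite !size_map. Qed.

Lemma at_relabel f g tau z : z < size tau -> at_ (relabel f g tau) z =
  Ev (op (at_ tau z)) (f (proc (at_ tau z))) (g (loc (at_ tau z))) (data (at_ tau z)).
Proof. by move=> lt_z; rewrite !at_map ?size_map. Qed.

Section Relabel.
Variables (n m v : nat) (f g : nat -> nat) (tau : seq ev).
Hypotheses (f_perm : perm_N n f) (g_perm : perm_N m g) (tau_E : all (in_E n m v) tau).
Local Notation tau' := (relabel f g tau).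

Let at_E z : z < size tau -> in_E n m v (at_ tau z).
Proof. by move=> lt_z; apply: (all_nthP ev0 tau_E). Qed.

Let proc_relabel_eq x y : x < size tau -> y < size tau ->
  (f (proc (at_ tau x)) == f (proc (at_ tau y))) = (proc (at_ tau x) == proc (at_ tau y)).
Proof.
by move=> /at_E /and3P [x_n _ _] /at_E /and3P [y_n _ _]; apply: perm_N_eq f_perm x_n y_n.
Qed.

Let loc_relabel_eq x y : x < size tau -> y < size tau ->
  (g (loc (at_ tau x)) == g (loc (at_ tau y))) = (loc (at_ tau x) == loc (at_ tau y)).
Proof.
by move=> /at_E /and3P [_ x_m _] /at_E /and3P [_ y_m _]; apply: perm_N_eq g_perm x_m y_m.
Qed.

Lemma prog_order_relabel : prog_order tau' =2 prog_order tau.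
Proof.
move=> x y; rewrite /prog_order size_relabel.
case: (ltnP y (size tau)) => //= lt_y; case: (ltnP x y) => //= lt_xy.
by rewrite !at_relabel /= ?proc_relabel_eq //; lia.
Qed.

Lemma loc_rank_relabel x : x < size tau -> loc_rank tau' x = loc_rank tau x.
Proof.
move=> lt_x; rewrite /loc_rank /relabel !find_map -/(relabel f g tau) at_relabel //=.
congr (if _ then _ else (_ : nat).*2 + _ + _).
apply: (@find_eq_nth _ ev0 (preim _ _)) => i lt_i.
by rewrite /preim /= /same_write /= -/(at_ tau i) loc_relabel_eq.
Qed.

Lemma loc_order_relabel : loc_order tau' =2 loc_order tau.
Proof.
move=> x y; rewrite /loc_order size_relabel.
case: (ltnP x (size tau)) => //= lt_x; case: (ltnP y (size tau)) => //= lt_y.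
by rewrite !at_relabel //= loc_relabel_eq // !loc_rank_relabel.
Qed.

Lemma unambiguous_relabel : unambiguous tau -> unambiguous tau'.
Proof.
move=> unamb j x [[lt_x L_x] W_x]; rewrite size_relabel in lt_x.
rewrite at_relabel //= in L_x W_x *.
have [nz_x uniq_x] := unamb _ _ (conj (conj lt_x erefl) W_x).
split=> // y [[lt_y L_y] W_y] ne_yx.
rewrite size_relabel in lt_y; rewrite at_relabel //= in L_y W_y *.
apply: uniq_x (conj (conj lt_y _) W_y) ne_yx.
by apply/eqP; rewrite -loc_relabel_eq // L_x L_y.
Qed.

End Relabel.

(** * Nice cycles *)

Lemma succk_range k x : 0 < x <= k -> 0 < succk k x <= k.
Proof. by rewrite /succk; case: ifP; lia. Qed.

Lemma succk_onto k y : 0 < y <= k -> exists2 x, 0 < x <= k & succk k x = y.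
Proof.
move=> y_k; exists (if y == 1 then k else y.-1); first by case: ifP; lia.
by rewrite /succk; do 2 case: ifP; lia.
Qed.

Lemma canonical_nice_cycle_of_graph Omega tau k (u v : nat -> nat) :
  unambiguous tau -> causal tau ->
  (forall j a b, inLw tau j a -> inLw tau j b -> Omega tau j a b <-> a < b) ->
  (forall x, 0 < x <= k -> [/\ prog_order tau (u x) (v x), loc_order tau (v x) (u (succk k x)),
     proc (at_ tau (u x)) = x & loc (at_ tau (u x)) = x]) ->
  canonical_nice_cycle Omega tau k.
Proof.
move=> unamb causal_tau simple cyc.
have po x : 0 < x <= k ->
    [/\ u x < v x, v x < size tau, proc (at_ tau (u x)) = x & proc (at_ tau (v x)) = x].
  by move=> /cyc [/and3P [lt_v lt_uv /eqP P_uv] _ P_u _]; rewrite -P_uv P_u.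
exists u, v; split=> [x y x_k y_k|x x_k].
  have [lt_ux _ P_ux P_vx] := po x x_k; have [lt_uy _ P_uy P_vy] := po y y_k.
  split=> [eq_uv|ne_xy]; last first.
    split=> eq_xy; apply: ne_xy; first by rewrite -P_ux eq_xy P_uy.
    by rewrite -P_vx eq_xy P_vy.
  case: (x =P y) => [eq_xy|ne_xy]; first by move: lt_ux; rewrite eq_uv eq_xy ltnn.
  by apply: ne_xy; rewrite -P_ux -P_vy eq_uv.
have [lt_ux lt_vx P_ux P_vx] := po x x_k.
have [_ lo _ _] := cyc x x_k; have [_ _ _ L_next] := cyc _ (succk_range x_k).
split; first by do 2 (split; first by split=> //; lia).
have := loc_order_Oext unamb causal_tau simple lo.
by case/and4P: lo => _ _ /eqP ->; rewrite L_next.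
Qed.

Lemma nice_cycle_relabelling n m d tau k (u v : nat -> nat) :
  all (in_E n m d) tau ->
  (forall x, 0 < x <= k ->
     prog_order tau (u x) (v x) /\ loc_order tau (v x) (u (succk k x))) ->
  (forall x y, 0 < x <= k -> 0 < y <= k -> x <> y ->
     proc (at_ tau (u x)) <> proc (at_ tau (u y)) /\ loc (at_ tau (v x)) <> loc (at_ tau (v y))) ->
  0 < k -> exists f g, [/\ perm_N n f, perm_N m g, k <= minn n m &
    forall x, 0 < x <= k -> f (proc (at_ tau (u x))) = x /\ g (loc (at_ tau (u x))) = x].
Proof.
move=> tau_E edges distinct k_gt0.
have u_E x : 0 < x <= k -> in_E n m d (at_ tau (u x)).
  move=> /edges [/and3P [lt_v lt_uv _] _]; apply: (all_nthP ev0 tau_E); lia.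
have [f f_perm f_u] : exists2 f, perm_N n f &
    forall x, 0 < x <= k -> f (proc (at_ tau (u x))) = x.
  apply: perm_N_inverse => [x /u_E /and3P [] // | x y x_k y_k eq_p].
  by case: (x =P y) => // /(distinct x y x_k y_k) [].
have [g g_perm g_u] : exists2 g, perm_N m g &
    forall x, 0 < x <= k -> g (loc (at_ tau (u x))) = x.
  apply: perm_N_inverse => [x /u_E /and3P [] // | x y].
  move=> /succk_onto [x' x'_k <-] /succk_onto [y' y'_k <-].
  have [_ /and4P [_ _ /eqP <- _]] := edges x' x'_k.
  have [_ /and4P [_ _ /eqP <- _]] := edges y' y'_k.
  by case: (x' =P y') => [-> //|/(distinct x' y' x'_k y'_k) []].
exists f, g; split=> // [|x x_k]; last by rewrite f_u ?g_u.
have /f_perm.1 : 0 < proc (at_ tau (u k)) <= n by case/and3P: (u_E k ltac:(lia)).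
have /g_perm.1 : 0 < loc (at_ tau (u k)) <= m by case/and3P: (u_E k ltac:(lia)).
by rewrite f_u ?g_u ?leq_min; lia.
Qed.

Lemma unambiguous_trace_seq_consistent S n m Omega :
  memory_system S -> causality S -> processor_symmetry S -> location_symmetry S ->
  0 < n -> 0 < m -> simple_witness S n m Omega ->
  (forall tau k, trace_of S n m tau -> unambiguous tau ->
     0 < k -> k <= minn n m -> ~ canonical_nice_cycle Omega tau k) ->
  forall tau, trace_of S n m tau -> unambiguous tau -> seq_consistent tau.
Proof.
move=> mem_S caus sym_p sym_l n_gt0 m_gt0 [_ simple] no_nice tau [d [d_gt0 tr]] unamb.
have causal_of tau' : trace_of_v S n m d tau' -> causal tau' by apply: caus.
have [cyc|acyc] := classic (exists len c, is_cycle (trace_graph tau) len c); last first.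
  apply: seq_consistent_of_acyclic (causal_of _ tr) _ => // len c cyc.
  by apply: acyc; exists len, c.
have [len [c short]] := shortest_cycle_exists cyc.
have [k [u [v [k_gt0 edges distinct]]]] := shortest_cycle_nice (@prog_order_irr tau)
  (@loc_order_irr tau) (@prog_order_trans tau) (@loc_order_trans tau)
  (@prog_order_cross tau) (@loc_order_cross tau) short.
have tau_E := trace_in_E mem_S n_gt0 m_gt0 d_gt0 tr.
have [f [g [f_perm g_perm k_le fg_u]]] := nice_cycle_relabelling tau_E edges distinct k_gt0.
have tr' : trace_of_v S n m d (relabel f g tau) by apply: sym_l => //; apply: sym_p.
have unamb' := unambiguous_relabel (f := f) g_perm tau_E unamb.
case: (no_nice (relabel f g tau) k _ unamb' k_gt0 k_le); first by exists d.
apply: (canonical_nice_cycle_of_graph (u := u) (v := v) unamb' (causal_of _ tr')).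
  by move=> j a b; apply: simple; exists d.
move=> x x_k; have [po lo] := edges x x_k; have [f_u g_u] := fg_u x x_k.
rewrite (prog_order_relabel g f_perm tau_E) (loc_order_relabel f g_perm tau_E).
have lt_u : u x < size tau by case/and3P: po; lia.
by rewrite !at_relabel //= f_u g_u.
Qed.

Theorem corollary7p6
  (S : nat -> nat -> nat -> seq letter -> Prop)
  (n m : nat)
  (Omega : seq ev -> nat -> nat -> nat -> Prop) :
  memory_system S ->
  causality S -> data_independence S ->
  processor_symmetry S -> location_symmetry S ->
  0 < n -> 0 < m ->
  simple_witness S n m Omega ->
  (forall tau k, trace_of S n m tau -> unambiguous tau ->
     0 < k -> k <= minn n m -> ~ canonical_nice_cycle Omega tau k) ->
  forall tau, trace_of S n m tau -> seq_consistent tau.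
Proof.
move=> mem_S caus data_ind sym_p sym_l n_gt0 m_gt0 simple no_nice tau [d [d_gt0 tr]].
have tau_E := trace_in_E mem_S n_gt0 m_gt0 d_gt0 tr.
have [tau' [lam [unamb' [tr' [lam0 [_ ->]]]]]] :=
  (data_ind n m d tau n_gt0 m_gt0 d_gt0 tau_E).1 tr.
apply: seq_consistent_rename_d lam0 _.
exact: (unambiguous_trace_seq_consistent mem_S caus sym_p sym_l n_gt0 m_gt0 simple no_nice
          tr' unamb').
Qed.
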